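(* Let $q$ be a prime power, $\beta$ a primitive element of $\mathbb{F}_{q^2}$, $\mathrm{Tr}(x)=x+x^q$, and $\Psi:\mathbb{F}_{q^2}^n\to\mathbb{F}_q^{2n}$, $\Psi(\alpha_0,\ldots,\alpha_{n-1})=\left(\mathrm{Tr}(\beta\alpha_0),\ldots,\mathrm{Tr}(\beta\alpha_{n-1}),\mathrm{Tr}(\beta^q\alpha_0),\ldots,\mathrm{Tr}(\beta^q\alpha_{n-1})\right)$. Let $\mathscr{C}\subseteq\mathbb{F}_{q^2}^n$. Then $\mathscr{C}$ is an ($\mathbb{F}_q$-linear) additive conjucyclic code of length $n$ over $\mathbb{F}_{q^2}$ if and only if $\mathscr{D}=\Psi(\mathscr{C})$ is a $q$-ary linear cyclic code of length $2n$. Moreover, in this case the minimum Hamming weight of $\mathscr{C}$ equals the minimum symplectic weight of $\mathscr{D}$: $w_h(\mathscr{C})=w_s(\mathscr{D})$.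
   Context: An ($\mathbb{F}_q$-linear) additive code of length $n$ over $\mathbb{F}_{q^2}$ is an $\mathbb{F}_q$-subspace of $\mathbb{F}_{q^2}^n$. It is conjucyclic if it is closed under $T(c_0,\ldots,c_{n-1})=(c_{n-1}^q,c_0,\ldots,c_{n-2})$. A $q$-ary linear cyclic code of length $2n$ is an $\mathbb{F}_q$-subspace of $\mathbb{F}_q^{2n}$ closed under $\sigma(v_0,\ldots,v_{2n-1})=(v_{2n-1},v_0,\ldots,v_{2n-2})$. For $u\in\mathbb{F}_{q^2}^n$, $w_h(u)$ is the number of nonzero coordinates; for $v\in\mathbb{F}_q^{2n}$, $w_s(v)=\#\{j\in\{0,\ldots,n-1\}:(v_j,v_{n+j})\neq(0,0)\}$. The minimum Hamming (resp. symplectic) weight of a code is the minimum of $w_h$ (resp. $w_s$) over its nonzero codewords. *)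

From HB Require Import structures.
From mathcomp Require Import all_boot all_order all_algebra all_field.
Set Implicit Arguments. Unset Strict Implicit. Unset Printing Implicit Defensive.
Import GRing.Theory.
Local Open Scope ring_scope.

(* F_{q^2} is a finite field L with #|L| = q^2; F_q is realised as the
   subfield {x in L | x^q = x}.  q-ary vectors are rows over L with all
   entries in F_q. *)

Section Defs.
Variables (L : finFieldType) (q : nat).

Definition Fq : {set L} := [set x : L | x ^+ q == x].

Definition Tr (x : L) : L := x + x ^+ q.

Definition Psi (beta : L) n (a : 'rV[L]_n) : 'rV[L]_(n + n) :=
  row_mx (\row_i Tr (beta * a 0 i)) (\row_i Tr (beta ^+ q * a 0 i)).

Definition conjshift n (c : 'rV[L]_n) : 'rV[L]_n :=
  \row_i (if val i == 0%N then c 0 (ord_pred i) ^+ q else c 0 (ord_pred i)).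

Definition cycshift m (v : 'rV[L]_m) : 'rV[L]_m := \row_i v 0 (ord_pred i).

Definition additive_code n (C : {set 'rV[L]_n}) : Prop :=
  [/\ 0 \in C,
      (forall x y, x \in C -> y \in C -> x + y \in C) &
      (forall (a : L) x, a \in Fq -> x \in C -> a *: x \in C)].

Definition additive_conjucyclic n (C : {set 'rV[L]_n}) : Prop :=
  additive_code C /\ (forall c, c \in C -> conjshift c \in C).

Definition qary_linear_code m (D : {set 'rV[L]_m}) : Prop :=
  [/\ (forall v, v \in D -> forall i, v 0 i \in Fq),
      0 \in D,
      (forall x y, x \in D -> y \in D -> x + y \in D) &
      (forall (a : L) x, a \in Fq -> x \in D -> a *: x \in D)].

Definition qary_linear_cyclic m (D : {set 'rV[L]_m}) : Prop :=
  qary_linear_code D /\ (forall v, v \in D -> cycshift v \in D).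

Definition wt_h n (u : 'rV[L]_n) : nat := #|[set i : 'I_n | u 0 i != 0]|.

Definition wt_s n (v : 'rV[L]_(n + n)) : nat :=
  #|[set j : 'I_n | (v 0 (lshift n j), v 0 (rshift n j)) != (0, 0)]|.

Definition is_min_weight m (w : 'rV[L]_m -> nat) (C : {set 'rV[L]_m}) (d : nat)
  : Prop :=
  (exists2 c, c \in C & (c != 0) && (w c == d)) /\
  (forall c, c \in C -> c != 0 -> (d <= w c)%N).

End Defs.

From mathcomp Require Import all_boot all_order all_algebra all_field.
From mathcomp Require Import zify ring.
Set Implicit Arguments. Unset Strict Implicit. Unset Printing Implicit Defensive.
Import GRing.Theory.
Local Open Scope ring_scope.

(* Psi is F_q-linear with values in F_q^{2n}, and it is injective, indeed
   coordinatewise: the pair (Tr(beta a), Tr(beta^q a)) vanishes only for a = 0,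
   because beta^2 is not in F_q (beta has order q^2 - 1, which does not divide
   2(q - 1)).  Since Tr(beta x^q) = Tr(beta^q x), the Frobenius twist in the
   conjucyclic shift T becomes the exchange of the two halves of Psi, so Psi
   turns T into the cyclic shift.  Hence Psi is a bijection from C onto D that
   transports all the structure and maps w_h to w_s. *)

Lemma pchar_nat_expn (F : finFieldType) p m k :
  prime p -> #|F| = (p ^ m)%N -> [pchar F].-nat (p ^ k)%N.
Proof.
move=> p_pr cardF; have p_char := card_finPcharP cardF p_pr.
by rewrite (eq_pnat _ (pcharf_eq p_char)) pnatX pnat_id.
Qed.

Lemma primitive_sqr_notin_Fq (F : finFieldType) q (beta : F) :
  (1 < q)%N -> #|F| = (q ^ 2)%N -> (#|F|.-1).-primitive_root beta ->
  beta ^+ 2 \notin Fq F q.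
Proof.
move=> q_gt1 cardF prim; rewrite inE -exprM; apply/negP => /eqP beta2q.
have order_gt0 : (0 < #|F|.-1)%N by rewrite cardF; nia.
have beta_neq0 : beta != 0.
  apply/eqP => beta0; have := prim_expr_order prim.
  by rewrite beta0 expr0n gtn_eqF // => /esym/eqP; rewrite oner_eq0.
have : beta ^+ (2 * q.-1) == 1.
  rewrite -(inj_eq (mulIf (expf_neq0 2 beta_neq0))) -exprD mul1r -beta2q.
  by apply/eqP; congr (_ ^+ _); lia.
rewrite -(prim_order_dvd prim) cardF => /dvdn_leq; nia.
Qed.

Section Trace.
Variables (L : finFieldType) (q : nat).
Hypotheses (qchar : [pchar L].-nat q) (frobK : forall x : L, x ^+ q ^+ q = x).

Lemma Tr0 : Tr q (0 : L) = 0.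
Proof. by case/andP: qchar => q_gt0 _; rewrite /Tr expr0n gtn_eqF // addr0. Qed.

Lemma TrD (x y : L) : Tr q (x + y) = Tr q x + Tr q y.
Proof. by rewrite /Tr exprDn_pchar // addrACA. Qed.

Lemma TrN (x : L) : Tr q (- x) = - Tr q x.
Proof. by rewrite /Tr exprNn_pchar // opprD. Qed.

Lemma TrZ (a x : L) : a \in Fq L q -> Tr q (a * x) = a * Tr q x.
Proof. by rewrite inE => /eqP aq; rewrite /Tr exprMn aq mulrDr. Qed.

Lemma Tr_frob (x : L) : Tr q (x ^+ q) = Tr q x.
Proof. by rewrite /Tr frobK addrC. Qed.

Lemma Tr_Fq (x : L) : Tr q x \in Fq L q.
Proof. by rewrite inE /Tr exprDn_pchar // frobK addrC. Qed.

Variable beta : L.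
Hypothesis beta2 : beta ^+ 2 \notin Fq L q.

Lemma Tr_twist (x : L) : Tr q (beta * x ^+ q) = Tr q (beta ^+ q * x).
Proof. by rewrite -Tr_frob exprMn frobK. Qed.

Lemma Tr_pair_eq0 (a : L) :
  (Tr q (beta * a) == 0) && (Tr q (beta ^+ q * a) == 0) = (a == 0).
Proof.
apply/andP/eqP => [[/eqP Tr1 /eqP Tr2] | ->]; last by rewrite !mulr0 Tr0 eqxx.
have : (beta ^+ 2 - beta ^+ 2 ^+ q) * a = 0.
  have -> : (beta ^+ 2 - beta ^+ 2 ^+ q) * a =
            beta * Tr q (beta * a) - beta ^+ q * Tr q (beta ^+ q * a).
    by rewrite /Tr !exprMn frobK; ring.
  by rewrite Tr1 Tr2 !mulr0 subrr.
move/eqP; rewrite mulf_eq0 subr_eq0 eq_sym.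
by move: beta2; rewrite inE => /negbTE -> /eqP.
Qed.

End Trace.

Lemma predD_modn m i :
  (i < m)%N -> ((i + m).-1 %% m)%N = (if i == 0%N then m.-1 else i.-1)%N.
Proof.
case: i => [|i] lt_im; first by rewrite add0n modn_small // prednK.
by rewrite modnDr modn_small // ltnW.
Qed.

Lemma ord_pred_lshift m (j : 'I_m) :
  ord_pred (lshift m j) =
  if val j == 0%N then rshift m (ord_pred j) else lshift m (ord_pred j).
Proof.
have lt_jm := ltn_ord j; apply: val_inj; rewrite (fun_if val) /=.
by rewrite !predD_modn ?ltn_addr //; do ![case: ifP => /eqP ?]; lia.
Qed.

Lemma ord_pred_rshift m (j : 'I_m) :
  ord_pred (rshift m j) =
  if val j == 0%N then lshift m (ord_pred j) else rshift m (ord_pred j).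
Proof.
have lt_jm := ltn_ord j; apply: val_inj; rewrite (fun_if val) /=.
by rewrite !predD_modn ?ltn_add2l //; do ![case: ifP => /eqP ?]; lia.
Qed.

Lemma cycshift_row_mx (L : finFieldType) m (u v : 'rV[L]_m) :
  cycshift (row_mx u v) =
  row_mx (\row_j (if val j == 0%N then v else u) 0 (ord_pred j))
         (\row_j (if val j == 0%N then u else v) 0 (ord_pred j)).
Proof.
apply/rowP => i; rewrite -(splitK i); case: (split i) => j /=.
  by rewrite mxE ord_pred_lshift row_mxEl mxE; case: eqP; rewrite ?row_mxEl ?row_mxEr.
by rewrite mxE ord_pred_rshift row_mxEr mxE; case: eqP; rewrite ?row_mxEl ?row_mxEr.
Qed.

Section PsiMap.
Variables (L : finFieldType) (q : nat) (beta : L) (n : nat).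
Hypotheses (qchar : [pchar L].-nat q) (frobK : forall x : L, x ^+ q ^+ q = x).
Hypothesis beta2 : beta ^+ 2 \notin Fq L q.
Local Notation Psi := (@Psi L q beta n).

Lemma Psi0 : Psi 0 = 0.
Proof.
by rewrite /Psi -row_mx0; congr row_mx; apply/rowP => j; rewrite !mxE mulr0 Tr0.
Qed.

Lemma PsiD (x y : 'rV_n) : Psi (x + y) = Psi x + Psi y.
Proof.
by rewrite /Psi add_row_mx; congr row_mx; apply/rowP => j; rewrite !mxE mulrDr TrD.
Qed.

Lemma PsiZ a (x : 'rV_n) : a \in Fq L q -> Psi (a *: x) = a *: Psi x.
Proof.
move=> a_Fq; rewrite /Psi scale_row_mx.
by congr row_mx; apply/rowP => j; rewrite !mxE mulrCA; apply: TrZ.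
Qed.

Lemma Psi_Fq (x : 'rV_n) i : Psi x 0 i \in Fq L q.
Proof. by rewrite /Psi mxE; case: split => j; rewrite mxE Tr_Fq. Qed.

Lemma Psi_inj : injective Psi.
Proof.
move=> x y /rowP Psi_xy; apply/rowP => j; apply/eqP; rewrite -subr_eq0.
rewrite -(Tr_pair_eq0 qchar frobK beta2) !mulrBr !TrD // !TrN // !subr_eq0.
have := Psi_xy (lshift n j); have := Psi_xy (rshift n j).
by rewrite /Psi !row_mxEl !row_mxEr !mxE => -> ->; rewrite !eqxx.
Qed.

Lemma Psi_conjshift (c : 'rV_n) : Psi (conjshift q c) = cycshift (Psi c).
Proof.
rewrite /Psi cycshift_row_mx; congr row_mx; apply/rowP => j; rewrite !mxE;
  case: eqP => _; rewrite ?mxE //.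
- exact: Tr_twist.
- by rewrite -exprMn Tr_frob.
Qed.

Lemma wt_s_Psi (x : 'rV_n) : wt_s (Psi x) = wt_h x.
Proof.
apply: eq_card => j; rewrite !inE /Psi row_mxEl row_mxEr !mxE xpair_eqE.
by rewrite Tr_pair_eq0.
Qed.

End PsiMap.

Lemma is_min_weight_imset (L : finFieldType) m k (f : 'rV[L]_m -> 'rV[L]_k)
    (w : 'rV[L]_m -> nat) (w' : 'rV[L]_k -> nat) (C : {set 'rV[L]_m}) d :
  injective f -> f 0 = 0 -> (forall c, w' (f c) = w c) ->
  is_min_weight w C d <-> is_min_weight w' (f @: C) d.
Proof.
move=> f_inj f0 wf; have f_eq0 c : (f c != 0) = (c != 0) by rewrite -f0 (inj_eq f_inj).
split=> [[[c cC /andP [c0 /eqP wc]] wmin] | [[_ /imsetP [c cC ->]]]].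
- split; first by exists (f c); rewrite ?imset_f // f_eq0 c0 wf wc eqxx.
  by move=> _ /imsetP [e eC ->]; rewrite f_eq0 wf; apply: wmin.
- rewrite f_eq0 wf => /andP [c0 wc] wmin; split; first by exists c; rewrite ?c0.
  by move=> e eC e0; rewrite -wf; apply: wmin; rewrite ?imset_f ?f_eq0.
Qed.

Section PsiCodes.
Variables (L : finFieldType) (q : nat) (beta : L) (n : nat) (C : {set 'rV[L]_n}).
Hypotheses (qchar : [pchar L].-nat q) (frobK : forall x : L, x ^+ q ^+ q = x).
Hypothesis beta2 : beta ^+ 2 \notin Fq L q.
Local Notation D := [set Psi q beta c | c in C].

Lemma additive_conjucyclic_Psi :
  additive_conjucyclic q C <-> qary_linear_cyclic q D.
Proof.
have memD c : (Psi q beta c \in D) = (c \in C).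
  by rewrite mem_imset //; apply: Psi_inj.
split=> [[[C0 CD CZ] CT] | [[_ D0 DD DZ] Dsigma]]; (split; [split |]).
- by move=> v /imsetP [c _ ->] i; apply: Psi_Fq.
- by rewrite -(Psi0 beta n qchar) memD.
- by move=> v w /imsetP [x xC ->] /imsetP [y yC ->]; rewrite -PsiD // memD CD.
- by move=> a v a_Fq /imsetP [x xC ->]; rewrite -PsiZ // memD CZ.
- by move=> v /imsetP [c cC ->]; rewrite -Psi_conjshift // memD CT.
- by rewrite -memD Psi0.
- by move=> x y xC yC; rewrite -memD PsiD // DD ?memD.
- by move=> a x a_Fq xC; rewrite -memD PsiZ // DZ ?memD.
- by move=> c cC; rewrite -memD Psi_conjshift // Dsigma ?memD.
Qed.

End PsiCodes.

Theorem theorem3p6 (L : finFieldType) (q : nat)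
  (hq : exists2 p, prime p & exists k, q = (p ^ k.+1)%N)
  (hL : #|L| = (q ^ 2)%N)
  (beta : L) (hbeta : (#|L|.-1).-primitive_root beta)
  (n : nat) (C : {set 'rV[L]_n}) :
  let D := [set Psi q beta c | c in C] in
  (additive_conjucyclic q C <-> qary_linear_cyclic q D) /\
  (additive_conjucyclic q C ->
     forall d : nat,
       is_min_weight (@wt_h L n) C d <-> is_min_weight (@wt_s L n) D d).
Proof.
move=> D; case: hq => p p_pr [k qE].
have qchar : [pchar L].-nat q.
  by rewrite qE; apply: (pchar_nat_expn _ p_pr); rewrite hL qE -expnM.
have frobK (x : L) : x ^+ q ^+ q = x by rewrite -exprM mulnn -hL expf_card.
have q_gt1 : (1 < q)%N by rewrite qE -{1}(expn0 p) ltn_exp2l ?prime_gt1.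
have beta2 := primitive_sqr_notin_Fq q_gt1 hL hbeta.
split; first exact: additive_conjucyclic_Psi.
move=> _ d.
by apply: is_min_weight_imset; [apply: Psi_inj | apply: Psi0 | apply: wt_s_Psi].
Qed.
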